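(* Let $H$ be the space of continuous $1$-periodic real functions with mean zero, and let $\Phi:H\to[0,\infty)$ be the functional defined below. Then $\Phi$ is bounded and continuous with respect to the $L^\infty$ norm; in particular, for all $\tilde q,\tilde q_1,\tilde q_2\in H$, \[ |\Phi(\tilde q)|\le\|\tilde q\|_{L^\infty},\qquad |\Phi(\tilde q_1)-\Phi(\tilde q_2)|\le\|\tilde q_1-\tilde q_2\|_{L^\infty}. \]
   Context: For $\tilde q\in H$, let $\psi>0$ be the positive $1$-periodic ground state eigenfunction of $-\frac{d^2}{dx^2}+\tilde q$ with periodic boundary conditions and $\tilde p=\psi'/\psi$; then $\tilde p$ is $1$-periodic, $\int_0^1\tilde p=0$, and $\tilde q=\tilde p'+\tilde p^2-\int_0^1\tilde p^2$. Define $\Phi(\tilde q)=\int_0^1\tilde p(x)^2\,dx$. *)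

From Stdlib Require Import Reals.
From Coquelicot Require Import Coquelicot.
Open Scope R_scope.

Definition periodic1 (f : R -> R) : Prop := forall x, f (x + 1) = f x.

Definition in_H (q : R -> R) : Prop :=
  (forall x, continuous q x) /\ periodic1 q /\ RInt q 0 1 = 0.

(* L^infinity norm (sup of |f| over R; for periodic f equal to sup over a period) *)
Definition Linf (f : R -> R) : R :=
  real (Lub_Rbar (fun y => exists x, y = Rabs (f x))).

Definition periodic_eigen (q : R -> R) (lam : R) (phi : R -> R) : Prop :=
  periodic1 phi /\
  (exists x, phi x <> 0) /\
  (forall x, ex_derive phi x /\ ex_derive (Derive phi) x) /\
  (forall x, - Derive_n phi 2 x + q x * phi x = lam * phi x).

Definition ground_state (q : R -> R) (lam : R) (psi : R -> R) : Prop :=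
  periodic_eigen q lam psi /\
  (forall x, 0 < psi x) /\
  (forall mu phi, periodic_eigen q mu phi -> lam <= mu).

Definition ptilde (psi : R -> R) (x : R) : R := Derive psi x / psi x.

Definition IsPhi (q : R -> R) (v : R) : Prop :=
  exists lam psi, ground_state q lam psi /\
    v = RInt (fun x => (ptilde psi x) ^ 2) 0 1.

From Stdlib Require Import Reals Lra.
From Coquelicot Require Import Coquelicot.
Open Scope R_scope.

(* If psi > 0 is periodic with psi'' = (q - lam) psi, then p = psi'/psi solves
   the Riccati equation p' = q - lam - p^2.  Integrating over a period, where p'
   and q have mean zero, gives Phi(q) = -lam.  For two such solutions the
   Wronskian W = psi1 psi2' - psi2 psi1' is periodic with
   W' = psi1 psi2 ((q2 - l2) - (q1 - l1)), so W' vanishes somewhere and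
   l1 - l2 <= sup |q1 - q2|.  Comparing with q = 0, lam = 0, psi = 1 bounds Phi
   itself. *)

Lemma periodic1_Derive (f : R -> R) :
  periodic1 f -> (forall x, ex_derive f x) -> periodic1 (Derive f).
Proof.
  intros Hf Hd x.
  rewrite <- (Derive_ext (fun y => f (y + 1)) f x Hf).
  symmetry; apply is_derive_unique.
  eapply is_derive_ext; [reflexivity|].
  rewrite <- (Rmult_1_l (Derive f (x + 1))).
  apply (is_derive_comp f (fun y => y + 1)); [apply Derive_correct, Hd|].
  auto_derive; auto; ring.
Qed.

Lemma periodic1_IZR (f : R -> R) : periodic1 f -> forall k y, f (y + IZR k) = f y.
Proof.
  intros Hf k; induction k using Z.peano_ind; intro y.
  - now rewrite Rplus_0_r.
  - rewrite succ_IZR, <- Rplus_assoc, Hf; apply IHk.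
  - rewrite <- Hf, <- (IHk y), <- Z.sub_1_r, minus_IZR.
    f_equal; ring.
Qed.

Lemma periodic1_bounded (f : R -> R) :
  (forall x, continuous f x) -> periodic1 f -> exists M, forall x, Rabs (f x) <= M.
Proof.
  intros Hc Hf.
  destruct (continuity_ab_maj (fun x => Rabs (f x)) 0 1) as [m [Hm _]]; [lra| |].
  { intros c _; apply continuity_pt_filterlim.
    apply (continuous_comp f Rabs); [apply Hc | apply continuous_Rabs]. }
  exists (Rabs (f m)); intro x.
  destruct (base_Int_part x) as [Hlo Hhi].
  replace x with (x - IZR (Int_part x) + IZR (Int_part x)) at 1 by ring.
  rewrite periodic1_IZR by exact Hf.
  apply Hm; lra.
Qed.

Lemma Linf_upper (f : R -> R) :
  (exists M, forall x, Rabs (f x) <= M) -> forall x, Rabs (f x) <= Linf f.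
Proof.
  intros [M HM] x; unfold Linf.
  destruct (Lub_Rbar_correct (fun y => exists x, y = Rabs (f x))) as [Hub Hlub].
  assert (Hx := Hub (Rabs (f x)) (ex_intro _ x eq_refl)).
  assert (HM' : Rbar_le (Lub_Rbar (fun y => exists x, y = Rabs (f x))) M).
  { apply Hlub; intros y [z ->]; apply HM. }
  destruct (Lub_Rbar _); simpl in *; tauto.
Qed.

Lemma Linf_upper_periodic1 (f : R -> R) :
  (forall x, continuous f x) -> periodic1 f -> forall x, Rabs (f x) <= Linf f.
Proof. intros Hc Hf; apply Linf_upper, periodic1_bounded; assumption. Qed.

Definition positive_periodic_solution (q : R -> R) (lam : R) (psi : R -> R) : Prop :=
  periodic1 psi /\ (forall x, 0 < psi x) /\
  (forall x, ex_derive psi x /\ ex_derive (Derive psi) x) /\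
  (forall x, Derive (Derive psi) x = (q x - lam) * psi x).

Lemma ground_state_positive_periodic_solution q lam psi :
  ground_state q lam psi -> positive_periodic_solution q lam psi.
Proof.
  intros [[Hper [_ [Hd Heq]]] [Hpos _]]; repeat split; try assumption; try apply Hd.
  intro x; specialize (Heq x).
  change (Derive_n psi 2 x) with (Derive (Derive psi) x) in Heq; lra.
Qed.

Lemma positive_periodic_solution_const :
  positive_periodic_solution (fun _ => 0) 0 (fun _ => 1).
Proof.
  assert (H0 : forall x, Derive (fun _ : R => 1) x = 0) by (intro; apply Derive_const).
  split; [intro; reflexivity|]; split; [intro; lra|]; split; [intro x; split|intro x].
  - apply ex_derive_const.
  - apply (ex_derive_ext (fun _ => 0)); [intro; now rewrite H0 | apply ex_derive_const].
  - rewrite (Derive_ext _ (fun _ => 0) x H0), Derive_const; ring.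
Qed.

Section RiccatiIntegral.

Variables (q : R -> R) (lam : R) (psi : R -> R).
Hypothesis Hpsi : positive_periodic_solution q lam psi.

Lemma is_derive_ptilde x : is_derive (ptilde psi) x (q x - lam - ptilde psi x ^ 2).
Proof.
  destruct Hpsi as [_ [Hpos [Hd Heq]]]; destruct (Hd x) as [Hd1 Hd2].
  assert (Hx : psi x <> 0) by (specialize (Hpos x); lra).
  replace (q x - lam - ptilde psi x ^ 2) with
    ((Derive (Derive psi) x * psi x - Derive psi x * Derive psi x) / psi x ^ 2)
    by (rewrite Heq; unfold ptilde; field; exact Hx).
  apply is_derive_div; [apply Derive_correct, Hd2 | apply Derive_correct, Hd1 | exact Hx].
Qed.

Lemma periodic1_ptilde : periodic1 (ptilde psi).
Proof.
  destruct Hpsi as [Hper [_ [Hd _]]]; intro x; unfold ptilde.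
  rewrite Hper, periodic1_Derive; [reflexivity | exact Hper | apply Hd].
Qed.

Lemma continuous_ptilde x : continuous (ptilde psi) x.
Proof.
  apply (ex_derive_continuous (K := R_AbsRing) (V := R_NormedModule)).
  eexists; apply is_derive_ptilde.
Qed.

Lemma RInt_ptilde_sq :
  (forall x, continuous q x) -> RInt q 0 1 = 0 ->
  RInt (fun x => ptilde psi x ^ 2) 0 1 = - lam.
Proof.
  intros Hqc Hq0.
  set (p := ptilde psi).
  assert (Hdc : forall x, continuous (fun x => q x - lam - p x ^ 2) x).
  { intro x; apply (continuous_minus (fun x => q x - lam) (fun x => p x ^ 2)).
    - apply (continuous_minus q (fun _ => lam)); [apply Hqc | apply continuous_const].
    - apply (continuous_ext (fun x => mult (p x) (p x)));
        [intro t; unfold mult; simpl; ring|].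
      apply (continuous_mult (U := R_UniformSpace) (K := R_AbsRing));
        apply continuous_ptilde. }
  assert (Hp : is_RInt (fun x => q x - lam - p x ^ 2) 0 1 (minus (p 1) (p 0))).
  { apply (is_RInt_derive (V := R_CompleteNormedModule)); intros x _;
      [apply is_derive_ptilde | apply Hdc]. }
  assert (Hp1 : p 1 = p 0) by (rewrite <- (Rplus_0_l 1); apply periodic1_ptilde).
  rewrite Hp1, minus_eq_zero in Hp.
  assert (Hq : is_RInt q 0 1 (RInt q 0 1)).
  { apply (RInt_correct (V := R_CompleteNormedModule)).
    apply (ex_RInt_continuous (V := R_CompleteNormedModule)); intros; apply Hqc. }
  rewrite Hq0 in Hq.
  apply is_RInt_unique.
  apply (is_RInt_ext (V := R_NormedModule)
           (fun x => (q x - lam) - (q x - lam - p x ^ 2))).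
  { intros x _; change (q x - lam - (q x - lam - p x ^ 2) = p x ^ 2 :> R); ring. }
  replace (- lam) with (minus (minus 0 (scal (1 - 0) lam)) 0)
    by (unfold minus, plus, opp, scal; simpl; unfold mult; simpl; ring).
  apply (is_RInt_minus (V := R_NormedModule)); [|exact Hp].
  apply (is_RInt_minus (V := R_NormedModule));
    [exact Hq | apply (is_RInt_const (V := R_NormedModule))].
Qed.

End RiccatiIntegral.

Definition wronskian (f g : R -> R) (x : R) : R := f x * Derive g x - g x * Derive f x.

Section EigenvalueComparison.

Variables (q1 q2 : R -> R) (l1 l2 : R) (psi1 psi2 : R -> R).
Hypothesis Hpsi1 : positive_periodic_solution q1 l1 psi1.
Hypothesis Hpsi2 : positive_periodic_solution q2 l2 psi2.

Lemma is_derive_wronskian x :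
  is_derive (wronskian psi1 psi2) x (psi1 x * psi2 x * ((q2 x - l2) - (q1 x - l1))).
Proof.
  destruct Hpsi1 as [_ [_ [Hd1 E1]]]; destruct Hpsi2 as [_ [_ [Hd2 E2]]].
  destruct (Hd1 x) as [a1 b1]; destruct (Hd2 x) as [a2 b2].
  apply Derive_correct, is_derive_Reals in a1, b1, a2, b2.
  apply is_derive_Reals.
  replace (psi1 x * psi2 x * ((q2 x - l2) - (q1 x - l1))) with
    ((Derive psi1 x * Derive psi2 x + psi1 x * Derive (Derive psi2) x)
     - (Derive psi2 x * Derive psi1 x + psi2 x * Derive (Derive psi1) x))
    by (rewrite E1, E2; ring).
  change (derivable_pt_lim (psi1 * Derive psi2 - psi2 * Derive psi1)%F x
    ((Derive psi1 x * Derive psi2 x + psi1 x * Derive (Derive psi2) x)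
     - (Derive psi2 x * Derive psi1 x + psi2 x * Derive (Derive psi1) x))).
  apply derivable_pt_lim_minus; apply derivable_pt_lim_mult; assumption.
Qed.

Lemma periodic1_wronskian : periodic1 (wronskian psi1 psi2).
Proof.
  destruct Hpsi1 as [P1 [_ [Hd1 _]]]; destruct Hpsi2 as [P2 [_ [Hd2 _]]].
  intro x; unfold wronskian.
  rewrite P1, P2, !periodic1_Derive;
    [reflexivity | assumption | intro; apply Hd1 | assumption | intro; apply Hd2].
Qed.

Lemma eigenvalue_sub_le M : (forall x, Rabs (q1 x - q2 x) <= M) -> l1 - l2 <= M.
Proof.
  intros HM; apply Rnot_lt_le; intro Hlt.
  destruct (MVT_gen (wronskian psi1 psi2) 0 1
    (fun x => psi1 x * psi2 x * ((q2 x - l2) - (q1 x - l1)))) as [c [_ Hc]].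
  - intros x _; apply is_derive_wronskian.
  - intros x _; apply continuity_pt_filterlim.
    apply (ex_derive_continuous (K := R_AbsRing) (V := R_NormedModule)).
    eexists; apply is_derive_wronskian.
  - rewrite <- (Rplus_0_l 1), periodic1_wronskian in Hc.
    destruct Hpsi1 as [_ [Pos1 _]]; destruct Hpsi2 as [_ [Pos2 _]].
    assert (Hprod : 0 < psi1 c * psi2 c) by (apply Rmult_lt_0_compat; auto).
    specialize (HM c); apply Rabs_le_between in HM.
    assert (0 < psi1 c * psi2 c * ((q2 c - l2) - (q1 c - l1)))
      by (apply Rmult_lt_0_compat; lra).
    lra.
Qed.

End EigenvalueComparison.

Lemma eigenvalue_dist_le q1 q2 l1 l2 psi1 psi2 M :
  positive_periodic_solution q1 l1 psi1 -> positive_periodic_solution q2 l2 psi2 ->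
  (forall x, Rabs (q1 x - q2 x) <= M) -> Rabs (l1 - l2) <= M.
Proof.
  intros H1 H2 HM; apply Rabs_le; split.
  - enough (l2 - l1 <= M) by lra.
    apply (eigenvalue_sub_le q2 q1 l2 l1 psi2 psi1); try assumption.
    intro x; rewrite Rabs_minus_sym; apply HM.
  - apply (eigenvalue_sub_le q1 q2 l1 l2 psi1 psi2); assumption.
Qed.

Lemma IsPhi_eigenvalue q v :
  in_H q -> IsPhi q v ->
  exists lam psi, positive_periodic_solution q lam psi /\ v = - lam.
Proof.
  intros [Hqc [_ Hq0]] [lam [psi [Hgs ->]]].
  apply ground_state_positive_periodic_solution in Hgs.
  exists lam, psi; split; [assumption | apply (RInt_ptilde_sq q); assumption].
Qed.

Theorem lemma2 :
  (forall (q : R -> R) (v : R), in_H q -> IsPhi q v -> Rabs v <= Linf q) /\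
  (forall (q1 q2 : R -> R) (v1 v2 : R),
      in_H q1 -> in_H q2 -> IsPhi q1 v1 -> IsPhi q2 v2 ->
      Rabs (v1 - v2) <= Linf (fun x => q1 x - q2 x)).
Proof.
  split.
  - intros q v Hq Hv.
    destruct (IsPhi_eigenvalue q v Hq Hv) as [lam [psi [Hpsi ->]]].
    destruct Hq as [Hqc [Hqp _]].
    rewrite Rabs_Ropp, <- (Rminus_0_r lam).
    apply (eigenvalue_dist_le q (fun _ => 0) lam 0 psi (fun _ => 1));
      [assumption | apply positive_periodic_solution_const |].
    intro x; rewrite Rminus_0_r; apply Linf_upper_periodic1; assumption.
  - intros q1 q2 v1 v2 Hq1 Hq2 Hv1 Hv2.
    destruct (IsPhi_eigenvalue q1 v1 Hq1 Hv1) as [l1 [psi1 [Hpsi1 ->]]].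
    destruct (IsPhi_eigenvalue q2 v2 Hq2 Hv2) as [l2 [psi2 [Hpsi2 ->]]].
    destruct Hq1 as [Hqc1 [Hqp1 _]]; destruct Hq2 as [Hqc2 [Hqp2 _]].
    replace (- l1 - - l2) with (l2 - l1) by ring; rewrite Rabs_minus_sym.
    apply (eigenvalue_dist_le q1 q2 l1 l2 psi1 psi2); try assumption.
    apply (Linf_upper_periodic1 (fun x => q1 x - q2 x)).
    + intro x; apply (continuous_minus (V := R_NormedModule) q1 q2); auto.
    + intro x; rewrite Hqp1, Hqp2; reflexivity.
Qed.
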